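(* With notation as in the context, there exist cellular 2-cocycles $\psi_0\in C^2(Z_0;\mathbf{Z})$ and $\psi_1\in C^2(Z_1;\mathbf{Z})$, each invariant under translations by the lattice $\Gamma=(2\mathbf{Z})^4\oplus\langle u\rangle$, such that $\langle\psi_i,[J]\rangle=\pm1$ for every jailcell $J\subset Z_i$ ($i=0,1$), and $\psi_1(\tau(c))=\psi_0(c)$ for every 2-cell $c$ of $Z_0$.
   Context: Give $\mathbf{R}^5$ the product cubical cell structure with integer vertices; $Z_0$ is its 2-skeleton (a cubical 2-complex whose 2-cells are unit squares), $u=e_1+\dots+e_5$, $\tau:\mathbf{R}^5\to\mathbf{R}^5$ is the translation $\tau(x)=x+u/2$, and $Z_1=\tau(Z_0)$ with the translated cell structure. A jailcell in $Z_0$ (resp. $Z_1$) is the boundary of a unit 3-cube of the cubical structure of $\mathbf{R}^5$ (resp. of its translate by $u/2$), regarded as an oriented cellular 2-cycle in $Z_0$ (resp. $Z_1$). *)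

From mathcomp Require Import all_boot all_order all_algebra.
Set Implicit Arguments. Unset Strict Implicit. Unset Printing Implicit Defensive.
Import Order.TTheory GRing.Theory Num.Theory.
Local Open Scope ring_scope.

(* Points of R^5 (all vertices involved are rational). *)
Definition point := 'I_5 -> rat.

Definition padd (x y : point) : point := fun k => x k + y k.
Definition evec (i : 'I_5) : point := fun k => (k == i)%:R.
(* u/2, where u = e_1 + ... + e_5 *)
Definition uhalf : point := fun _ => 1 / 2.

(* A (candidate) unit square  base + [0,1] e_d1 + [0,1] e_d2 , carrying the
   orientation e_d1 /\ e_d2 (a genuine square requires d1 < d2). *)
Record cell2 := Cell2 { base : point; dir1 : 'I_5; dir2 : 'I_5 }.

Definition is_intpt (x : point) := forall k, exists z : int, x k = z%:~R.
Definition is_halfpt (x : point) := forall k, exists z : int, x k = z%:~R + 1 / 2.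

(* 2-cells of Z_0 (integer base vertex) and of Z_1 = tau(Z_0). *)
Definition cell_Z0 (c : cell2) := (dir1 c < dir2 c)%N /\ is_intpt (base c).
Definition cell_Z1 (c : cell2) := (dir1 c < dir2 c)%N /\ is_halfpt (base c).

Definition shift (g : point) (c : cell2) : cell2 :=
  Cell2 (padd (base c) g) (dir1 c) (dir2 c).
Definition tau (c : cell2) : cell2 := shift uhalf c.

(* Integer 2-cochains: value on each 2-cell with its standard orientation.
   (Only values on cells of Z_i matter.)  Since Z_i is a 2-complex,
   C^3(Z_i) = 0 and every 2-cochain is a cocycle. *)
Definition cochain2 := cell2 -> int.

(* The lattice Gamma = (2Z)^4 (+) <u>, spanned by 2e_1,...,2e_4 and u. *)
Definition in_Gamma (g : point) :=
  exists (a : 'I_5 -> int) (m : int),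
    a ord_max = 0 /\ forall k, g k = (2 * a k + m)%:~R.

Definition Gamma_invariant (cellP : cell2 -> Prop) (psi : cochain2) :=
  forall g, in_Gamma g -> forall c, cellP c -> psi (shift g c) = psi c.

(* Evaluation of psi on the jailcell = oriented boundary of the unit 3-cube
   v + [0,1]e_i + [0,1]e_j + [0,1]e_k  (i < j < k):
   d(e_i e_j e_k) = (F_i^1 - F_i^0) - (F_j^1 - F_j^0) + (F_k^1 - F_k^0). *)
Definition jail_eval (psi : cochain2) (v : point) (i j k : 'I_5) : int :=
    (psi (Cell2 (padd v (evec i)) j k) - psi (Cell2 v j k))
  - (psi (Cell2 (padd v (evec j)) i k) - psi (Cell2 v i k))
  + (psi (Cell2 (padd v (evec k)) i j) - psi (Cell2 v i j)).

From mathcomp Require Import all_boot all_order all_algebra.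
From mathcomp Require Import zify ring.
Import Order.TTheory GRing.Theory Num.Theory.
Local Open Scope ring_scope.

(* The same cochain works for Z_0 and Z_1: on a square with directions
   d1 < d2 and base vertex x, let psi be the parity of x_m - x_d1, where
   m = third_dir d1 d2 is a third direction chosen for each pair.  At the
   vertices of both complexes coordinate differences are integers; tau leaves
   them unchanged and Gamma changes them by even integers, which gives the
   invariance and compatibility conditions.  On the jailcell of the cube
   spanned by e_i, e_j, e_k, the two faces normal to e_i contribute +-1 when
   third_dir j k = i and cancel otherwise (likewise for j and k), and
   third_dir is chosen so that exactly one of these three cases occurs. *)

(* Only evaluated at integers, where [numq x] is [x] itself. *)
Definition parity (x : rat) : int := (numq x %% 2)%Z.

Lemma parity_int (z : int) : parity z%:~R = (z %% 2)%Z.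
Proof. by rewrite /parity numq_int. Qed.

Lemma parity_intS (z : int) :
  parity (z + 1)%:~R - parity z%:~R = 1 \/ parity (z + 1)%:~R - parity z%:~R = -1.
Proof.
rewrite !parity_int -modzDml.
have := @modz_ge0 z 2 isT; have := @ltz_pmod z 2 isT.
have [->|->] : (z %% 2)%Z = 0 \/ (z %% 2)%Z = 1 by lia.
- by left.
- by right.
Qed.

Lemma parity_int_even (a z : int) : parity (a * 2 + z)%:~R = parity z%:~R.
Proof. by rewrite !parity_int modzMDl. Qed.

Definition int_diffs (x : point) := forall a b, exists z : int, x a - x b = z%:~R.
Definition even_diffs (g : point) := forall a b, exists z : int, g a - g b = (z * 2)%:~R.

Lemma intpt_int_diffs x : is_intpt x -> int_diffs x.
Proof.
move=> hx a b; have [za ->] := hx a; have [zb ->] := hx b.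
by exists (za - zb); rewrite intrB.
Qed.

Lemma halfpt_int_diffs x : is_halfpt x -> int_diffs x.
Proof.
move=> hx a b; have [za ->] := hx a; have [zb ->] := hx b.
by exists (za - zb); rewrite intrB; ring.
Qed.

Lemma Gamma_even_diffs g : in_Gamma g -> even_diffs g.
Proof.
move=> [n [m [_ hg]]] a b; exists (n a - n b).
by rewrite !hg !intrD !intrM !intrB; ring.
Qed.

Lemma uhalf_even_diffs : even_diffs uhalf.
Proof. by move=> a b; exists 0; rewrite subrr. Qed.

Definition third_dir_nat (j k : nat) : nat :=
  (match k - j with 1 => j + 2 | 2 => j + 3 | 3 => k + 3 | _ => k + 2 end)%N.
Definition third_dir (j k : 'I_5) : 'I_5 :=
  Ordinal (ltn_pmod (third_dir_nat j k) (isT : (0 < 5)%N)).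

Lemma third_dir_exactly_one (i j k : 'I_5) : (i < j)%N -> (j < k)%N ->
  ((third_dir j k == i) + (third_dir i k == j) + (third_dir i j == k) = 1)%N.
Proof. by case: i j k => [[|[|[|[|[|?]]]]] ?] [[|[|[|[|[|?]]]]] ?] [[|[|[|[|[|?]]]]] ?]. Qed.

Definition parity_cochain : cochain2 := fun c =>
  parity (base c (third_dir (dir1 c) (dir2 c)) - base c (dir1 c)).

Lemma parity_cochain_shift g c : even_diffs g -> int_diffs (base c) ->
  parity_cochain (shift g c) = parity_cochain c.
Proof.
rewrite /parity_cochain /shift /padd /=.
set m := third_dir _ _; set d := dir1 c => hg hc.
have [a ha] := hg m d; have [z hz] := hc m d.
have -> : base c m + g m - (base c d + g d) = (a * 2 + z)%:~R.
  by rewrite intrD -ha -hz; ring.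
by rewrite parity_int_even hz.
Qed.

Lemma parity_cochain_Gamma_invariant (cellP : cell2 -> Prop) :
  (forall c, cellP c -> int_diffs (base c)) -> Gamma_invariant cellP parity_cochain.
Proof.
by move=> hP g /Gamma_even_diffs hg c /hP; apply: parity_cochain_shift.
Qed.

(* Difference of the values of [parity_cochain] on the two faces of a cube
   with directions j, m, normal to e_i, at base points v + e_i and v. *)
Definition face_jump (v : point) (i j m : 'I_5) : int :=
  parity (padd v (evec i) m - padd v (evec i) j) - parity (v m - v j).

Lemma jail_eval_face_jumps v (i j k : 'I_5) : jail_eval parity_cochain v i j k =
  face_jump v i j (third_dir j k) - face_jump v j i (third_dir i k)
  + face_jump v k i (third_dir i j).
Proof. by []. Qed.

Lemma face_jumpE v (i j m : 'I_5) : j != i ->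
  face_jump v i j m = if m == i then face_jump v i j i else 0.
Proof.
move=> /negbTE ji; case: eqP => [-> //|/eqP /negbTE mi].
by rewrite /face_jump /padd /evec ji mi !addr0 subrr.
Qed.

Lemma face_jump_pm1 v (i j : 'I_5) : int_diffs v -> j != i ->
  face_jump v i j i = 1 \/ face_jump v i j i = -1.
Proof.
move=> hv /negbTE ji; have [z hz] := hv i j.
rewrite /face_jump /padd /evec ji eqxx addr0 hz.
have -> : v i + 1%:R - v j = (z + 1)%:~R by rewrite intrD -hz; ring.
exact: parity_intS.
Qed.

Lemma jail_eval_pm1 v (i j k : 'I_5) : int_diffs v -> (i < j)%N -> (j < k)%N ->
  jail_eval parity_cochain v i j k = 1 \/ jail_eval parity_cochain v i j k = -1.
Proof.
move=> hv lt_ij lt_jk.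
have ne_ij : i != j by rewrite neq_ltn lt_ij.
have ne_ik : i != k by rewrite neq_ltn (ltn_trans lt_ij lt_jk).
have ne_ji : j != i by rewrite eq_sym.
rewrite jail_eval_face_jumps (face_jumpE _ _ _ _ ne_ji) (face_jumpE _ _ _ _ ne_ij)
  (face_jumpE _ _ _ _ ne_ik).
have := third_dir_exactly_one _ _ _ lt_ij lt_jk.
case: eqP => _; case: eqP => _; case: eqP => _ //= _;
  rewrite ?subr0 ?sub0r ?addr0 ?add0r.
- exact: face_jump_pm1.
- by case: (face_jump_pm1 _ _ _ hv ne_ij) => ->; rewrite ?opprK; [right|left].
- exact: face_jump_pm1.
Qed.

Theorem propositionA5 :
  exists psi0 psi1 : cochain2,
    Gamma_invariant cell_Z0 psi0 /\ Gamma_invariant cell_Z1 psi1 /\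
    (forall (v : point) (i j k : 'I_5), is_intpt v ->
       (i < j)%N -> (j < k)%N ->
       jail_eval psi0 v i j k = 1 \/ jail_eval psi0 v i j k = -1) /\
    (forall (v : point) (i j k : 'I_5), is_halfpt v ->
       (i < j)%N -> (j < k)%N ->
       jail_eval psi1 v i j k = 1 \/ jail_eval psi1 v i j k = -1) /\
    (forall c : cell2, cell_Z0 c -> psi1 (tau c) = psi0 c).
Proof.
exists parity_cochain, parity_cochain; split; [|split; [|split; [|split]]].
- by apply: parity_cochain_Gamma_invariant => c [_ /intpt_int_diffs].
- by apply: parity_cochain_Gamma_invariant => c [_ /halfpt_int_diffs].
- by move=> v i j k /intpt_int_diffs; apply: jail_eval_pm1.
- by move=> v i j k /halfpt_int_diffs; apply: jail_eval_pm1.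
- move=> c [_ /intpt_int_diffs hc].
  exact: parity_cochain_shift uhalf_even_diffs hc.
Qed.
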